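(* Let $E$ be a Banach lattice. Then: (1) every un-convergent net in $E$ has an embedded sequence that is uo-convergent to the same limit. If $E$ has an order continuous norm, then moreover: (2) every un-convergent net in $E$ has an embedded sequence that is uo-convergent as well as un-convergent to the same limit; (3) a sequence in $E$ is un-convergent to $x\in E$ if and only if every subsequence has a further subsequence that is uo-convergent to $x$.
   Context: All vector lattices are real and Archimedean. A net $(x_\alpha)$ in $E$ order converges to $x$ if there is a net $y_\beta\downarrow 0$ such that for each $\beta_0$ there is $\alpha_0$ with $|x_\alpha-x|\leq y_{\beta_0}$ for $\alpha\geq\alpha_0$; it uo-converges to $x$ if $|x_\alpha-x|\wedge|y|$ order converges to $0$ for every $y\in E$. A net $(x_\alpha)$ in a Banach lattice $E$ un-converges to $x$ if $\| |x_\alpha-x|\wedge|y| \|\to0$ for every $y\in E$. Embedded sequence: given a net $(x_\alpha)_{\alpha\in A}$, a sequence $(x_{\alpha_n})_{n\geq1}$ with $\alpha_1\leq\alpha_2\leq\dotsb$ in $A$, where moreover $\alpha_1<\alpha_2<\dotsb$ when $A$ has no largest element (the $\alpha_n$ need not be cofinal). *)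

From HB Require Import structures.
From mathcomp Require Import all_boot all_order all_algebra.
From mathcomp Require Import all_classical all_reals all_analysis.
Set Implicit Arguments. Unset Strict Implicit. Unset Printing Implicit Defensive.
Import Order.TTheory GRing.Theory Num.Theory.
Import numFieldNormedType.Exports.
Local Open Scope ring_scope.

Record directed_set := DirectedSet {
  dcar :> Type;
  dle : dcar -> dcar -> Prop;
  dle_refl : forall a, dle a a;
  dle_trans : forall a b c, dle a b -> dle b c -> dle a c;
  dinhabited : exists a : dcar, True;
  ddirected : forall a b, exists c, dle a c /\ dle b c
}.

Lemma nat_le_refl (a : nat) : (a <= a)%N. Proof. by []. Qed.
Lemma nat_le_trans (a b c : nat) : (a <= b)%N -> (b <= c)%N -> (a <= c)%N.
Proof. move=> h1 h2; exact: leq_trans h1 h2. Qed.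
Lemma nat_inh : exists a : nat, True. Proof. by exists 0%N. Qed.
Lemma nat_directed (a b : nat) : exists c, (a <= c)%N /\ (b <= c)%N.
Proof. by exists (maxn a b); rewrite leq_maxl leq_maxr. Qed.

Definition nat_dir : directed_set :=
  @DirectedSet nat (fun m n => (m <= n)%N) nat_le_refl nat_le_trans nat_inh
    nat_directed.

Record banach_lattice (R : realType) (E : completeNormedModType R) := BanachLattice {
  ble : E -> E -> Prop;
  bsup : E -> E -> E;
  ble_refl : forall x, ble x x;
  ble_trans : forall x y z, ble x y -> ble y z -> ble x z;
  ble_anti : forall x y, ble x y -> ble y x -> x = y;
  ble_add : forall x y z, ble x y -> ble (x + z) (y + z);
  ble_scale : forall (a : R) x y, 0 <= a -> ble x y -> ble (a *: x) (a *: y);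
  bsup_ubl : forall x y, ble x (bsup x y);
  bsup_ubr : forall x y, ble y (bsup x y);
  bsup_least : forall x y z, ble x z -> ble y z -> ble (bsup x y) z;
  barchimedean : forall x y, ble 0 x -> (forall n : nat, ble (n%:R *: x) y) -> x = 0;
  bnorm_mono : forall x y, ble (bsup x (- x)) (bsup y (- y)) -> `|x| <= `|y|
}.

Section BL.
Variables (R : realType) (E : completeNormedModType R) (B : banach_lattice E).

Definition binf (x y : E) : E := - bsup B (- x) (- y).
Definition babs (x : E) : E := bsup B x (- x).

Definition is_inf_net (D : directed_set) (y : D -> E) (z : E) : Prop :=
  (forall b, ble B z (y b)) /\
  (forall w, (forall b, ble B w (y b)) -> ble B w z).

Definition decr_to_0 (D : directed_set) (y : D -> E) : Prop :=
  (forall b1 b2, dle b1 b2 -> ble B (y b2) (y b1)) /\ is_inf_net y 0.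

Definition order_conv (D : directed_set) (x : D -> E) (l : E) : Prop :=
  exists (D' : directed_set) (y : D' -> E), decr_to_0 y /\
    forall b0, exists a0, forall a, dle a0 a -> ble B (babs (x a - l)) (y b0).

Definition uo_conv (D : directed_set) (x : D -> E) (l : E) : Prop :=
  forall y : E, order_conv (fun a => binf (babs (x a - l)) (babs y)) 0.

Definition un_conv (D : directed_set) (x : D -> E) (l : E) : Prop :=
  forall y : E, forall e : R, 0 < e ->
    exists a0, forall a, dle a0 a -> `| binf (babs (x a - l)) (babs y) | < e.

Definition order_continuous_norm : Prop :=
  forall (D : directed_set) (x : D -> E), decr_to_0 x ->
    forall e : R, 0 < e -> exists a0, forall a, dle a0 a -> `| x a | < e.
End BL.

Definition has_largest (D : directed_set) : Prop :=
  exists m : D, forall a, dle a m.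

Definition embedded (D : directed_set) (al : nat -> D) : Prop :=
  (forall n, dle (al n) (al n.+1)) /\
  (~ has_largest D -> forall n, ~ dle (al n.+1) (al n)).

Definition strictly_incr (phi : nat -> nat) : Prop :=
  forall n, (phi n < phi n.+1)%N.

(* (1) Using un-convergence, choose indices a_0 <= a_1 <= ... greedily so that
   u_n = |x_(a_n) - l| satisfies || u_n /\ (u_0 + ... + u_(n-1)) || < 2^-n / (n+1).
   The vectors (n+1) (u_n /\ (u_0 + ... + u_(n-1))) are then norm-summable, so by
   completeness they are all below one z >= 0, whence u_n /\ u_m <= z / (n+1)
   for m < n.  Fix y >= 0 and let v >= 0 lie below every tail upper bound of
   (u_n /\ y).  Splitting u_n /\ y <= k (u_n /\ u_m) + (y - k u_m)^+ shows
   v <= (y - k u_m)^+ for every k, which forces v /\ u_m = 0.  Being disjoint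
   from the whole sequence, v is then below y - j v for every j, so v = 0 by the
   Archimedean property: the tail upper bounds decrease to 0.
   (2) With an order continuous norm, uo-convergence implies un-convergence.
   (3) Un-convergence passes to subsequences, and (1) applies to them; conversely
   a subsequence staying un-away from l has no uo-convergent further
   subsequence, by (2). *)

From HB Require Import structures.
From mathcomp Require Import all_boot all_order all_algebra.
From mathcomp Require Import all_classical all_reals all_analysis.
Import Order.TTheory GRing.Theory Num.Theory.
Import numFieldNormedType.Exports.
Local Open Scope classical_set_scope.
Local Open Scope ring_scope.

Lemma strictly_incr_geq {phi} : strictly_incr phi -> forall n, (n <= phi n)%N.
Proof. by move=> phi_incr; elim=> // n IHn; apply: leq_ltn_trans IHn (phi_incr n). Qed.

Lemma nat_dir_no_largest : ~ has_largest nat_dir.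
Proof. by case=> m /(_ m.+1); rewrite /= ltnn. Qed.

Lemma embedded_nat_strictly_incr al : embedded (D := nat_dir) al -> strictly_incr al.
Proof. by case=> _ /(_ nat_dir_no_largest) al_incr n; rewrite ltnNge; apply/negP/al_incr. Qed.

Section BanachLattice.
Context {R : realType} {E : completeNormedModType R} {B : banach_lattice E}.
Local Notation le := (ble B).
Local Notation sup := (bsup B).
Local Notation inf := (binf B).
Local Notation abs := (babs B).
#[local] Hint Resolve ble_refl : core.

Definition bpos (x : E) : E := sup x 0.

Lemma bleD2l z {x y} : le x y -> le (z + x) (z + y).
Proof. by rewrite ![z + _]addrC; apply: ble_add. Qed.

Lemma bleD x y z w : le x y -> le z w -> le (x + z) (y + w).
Proof. by move=> xy zw; apply: (ble_trans (y := y + z)); [apply: ble_add|apply: bleD2l]. Qed.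

Lemma subr_bge0 x y : le 0 (y - x) <-> le x y.
Proof.
split=> h; first by have := ble_add x h; rewrite add0r subrK.
by have := ble_add (- x) h; rewrite subrr.
Qed.

Lemma bleN2 x y : le (- x) (- y) <-> le y x.
Proof.
suff bleN u v : le u v -> le (- v) (- u) by split=> /bleN; rewrite ?opprK.
move=> uv; have := ble_add (- u - v) uv.
by rewrite addrA subrr add0r addrCA subrr addr0.
Qed.

Lemma bsupC x y : sup x y = sup y x.
Proof.
by apply: ble_anti; apply: bsup_least;
  [apply: bsup_ubr|apply: bsup_ubl|apply: bsup_ubr|apply: bsup_ubl].
Qed.

Lemma bsup_r x y : le x y -> sup x y = y.
Proof. by move=> xy; apply: ble_anti; [apply: bsup_least|apply: bsup_ubr]. Qed.

Lemma addr_bsup z x y : z + sup x y = sup (z + x) (z + y).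
Proof.
apply: ble_anti; last by apply: bsup_least; apply: bleD2l; [apply: bsup_ubl|apply: bsup_ubr].
suff h : le (sup x y) (- z + sup (z + x) (z + y)) by have := bleD2l z h; rewrite addNKr.
apply: bsup_least.
  by have := bleD2l (- z) (bsup_ubl B (z + x) (z + y)); rewrite addKr.
by have := bleD2l (- z) (bsup_ubr B (z + x) (z + y)); rewrite addKr.
Qed.

Lemma binf_lbl x y : le (inf x y) x.
Proof. by rewrite /binf -bleN2 opprK; apply: bsup_ubl. Qed.

Lemma binf_lbr x y : le (inf x y) y.
Proof. by rewrite /binf -bleN2 opprK; apply: bsup_ubr. Qed.

Lemma binf_greatest x y z : le z x -> le z y -> le z (inf x y).
Proof. by move=> zx zy; rewrite /binf -bleN2 opprK; apply: bsup_least; rewrite bleN2. Qed.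

Lemma binf_le2 x y x' y' : le x x' -> le y y' -> le (inf x y) (inf x' y').
Proof.
move=> xx' yy'; apply: binf_greatest.
  exact: ble_trans (binf_lbl _ _) xx'.
exact: ble_trans (binf_lbr _ _) yy'.
Qed.

Lemma binfC x y : inf x y = inf y x.
Proof. by rewrite /binf bsupC. Qed.

Lemma binf_l x y : le x y -> inf x y = x.
Proof. by move=> xy; apply: ble_anti; [apply: binf_lbl|apply: binf_greatest]. Qed.

Lemma binf_ge0 {x y} : le 0 x -> le 0 y -> le 0 (inf x y).
Proof. exact: binf_greatest. Qed.

Lemma addr_binf z x y : z + inf x y = inf (z + x) (z + y).
Proof. by rewrite /binf !opprD -addr_bsup opprD opprK. Qed.

Lemma bsupDbinf x y : sup x y + inf x y = x + y.
Proof.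
have h : x + y + sup (- x) (- y) = sup y x.
  by rewrite addr_bsup addrK addrAC subrr add0r.
by rewrite /binf bsupC -h addrK.
Qed.

Lemma bleZ2l {a x y} : 0 < a -> le (a *: x) (a *: y) <-> le x y.
Proof.
move=> a_gt0; split=> h; last exact: ble_scale (ltW a_gt0) h.
have a_inv_ge0 : 0 <= a^-1 by rewrite invr_ge0 ltW.
have := ble_scale a_inv_ge0 h.
by rewrite !scalerA mulVf ?gt_eqF // !scale1r.
Qed.

Lemma scaler_bsup a x y : 0 < a -> a *: sup x y = sup (a *: x) (a *: y).
Proof.
move=> a_gt0; apply: ble_anti; last first.
  by apply: bsup_least; rewrite bleZ2l //; [apply: bsup_ubl|apply: bsup_ubr].
have aK : a *: (a^-1 *: sup (a *: x) (a *: y)) = sup (a *: x) (a *: y).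
  by rewrite scalerA mulfV ?gt_eqF // scale1r.
rewrite -aK bleZ2l //; apply: bsup_least; rewrite -(bleZ2l a_gt0) aK;
  [apply: bsup_ubl|apply: bsup_ubr].
Qed.

Lemma scaler_binf a x y : 0 < a -> a *: inf x y = inf (a *: x) (a *: y).
Proof. by move=> a_gt0; rewrite /binf scalerN scaler_bsup // !scalerN. Qed.

Lemma scaler_bge0 {a x} : 0 <= a -> le 0 x -> le 0 (a *: x).
Proof. by move=> a_ge0 x_ge0; have := ble_scale a_ge0 x_ge0; rewrite scaler0. Qed.

Lemma bleZ2r {a b x} : a <= b -> le 0 x -> le (a *: x) (b *: x).
Proof.
move=> ab x_ge0; apply/subr_bge0; rewrite -scalerBl.
by apply: scaler_bge0; rewrite ?subr_ge0.
Qed.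

Lemma bleZr_ge1 {a x} : 1 <= a -> le 0 x -> le x (a *: x).
Proof. by move=> a_ge1 x_ge0; have := bleZ2r a_ge1 x_ge0; rewrite scale1r. Qed.

Lemma ble_babs x : le x (abs x). Proof. exact: bsup_ubl. Qed.

Lemma babs_ge0 x : le 0 (abs x).
Proof.
have Nxx : le (- abs x) (abs x).
  apply: (ble_trans (y := x)); last exact: ble_babs.
  by rewrite -bleN2 opprK; apply: bsup_ubr.
have := ble_add (abs x) Nxx; rewrite addNr => h.
by rewrite -(bleZ2l (ltr0n R 2)) scaler0 scaler_nat mulr2n.
Qed.

Lemma ger0_babs x : le 0 x -> abs x = x.
Proof.
move=> x_ge0; rewrite /babs bsupC bsup_r //.
by apply: (ble_trans (y := 0)) => //; rewrite -bleN2 opprK oppr0.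
Qed.

Lemma babsN x : abs (- x) = abs x.
Proof. by rewrite /babs opprK bsupC. Qed.

Lemma bnorm_le x y : le 0 x -> le x y -> `|x| <= `|y|.
Proof.
move=> x_ge0 xy; apply: (@bnorm_mono _ _ B); change (le (abs x) (abs y)).
by rewrite !ger0_babs //; exact: ble_trans xy.
Qed.

Lemma babs_bsupB a b c : le (abs (sup a c - sup b c)) (abs (a - b)).
Proof.
suff key a' b' : le (sup a' c - sup b' c) (abs (a' - b')).
  apply: bsup_least; first exact: key.
  by rewrite opprB -babsN opprB; apply: key.
apply/subr_bge0; rewrite opprB addrA subr_bge0 addrC; apply: bsup_least.
  rewrite -[X in ble _ X _](subrKC b' a'); apply: bleD; [exact: bsup_ubl|exact: ble_babs].
rewrite -[X in ble _ X _](addr0 c); apply: bleD; [exact: bsup_ubr|exact: babs_ge0].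
Qed.

Lemma bpos_ge0 x : le 0 (bpos x). Proof. exact: bsup_ubr. Qed.

Lemma binf_bpos_bposN x : inf (bpos x) (bpos (- x)) = 0.
Proof.
have posB : bpos x - x = bpos (- x) by rewrite addrC addr_bsup addNr addr0 bsupC.
have posD : bpos x + bpos (- x) = sup (bpos (- x)) (bpos x).
  by rewrite /bpos addr_bsup addr0 posB.
apply: (addrI (sup (bpos x) (bpos (- x)))).
by rewrite bsupDbinf posD bsupC addr0.
Qed.

Lemma binf_le_addr_bposB a x f : le (inf a x) (inf a f + bpos (x - f)).
Proof.
apply: (ble_trans (y := inf a (f + bpos (x - f)))).
  apply: binf_le2 => //; rewrite -[X in ble _ X _](subrKC f x).
  by apply: bleD2l; apply: bsup_ubl.
rewrite [inf a f + _]addrC addr_binf; apply: binf_le2; last by rewrite addrC.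
by rewrite -[X in ble _ X _]add0r; apply: ble_add; apply: bpos_ge0.
Qed.

Lemma binfZr_le {k x} y : 1 <= k -> le 0 x -> le (inf x (k *: y)) (k *: inf x y).
Proof.
move=> k_ge1 x_ge0; rewrite scaler_binf ?(lt_le_trans ltr01) //.
by apply: binf_le2 => //; apply: bleZr_ge1.
Qed.

Lemma binfDr_le {a b c} : le 0 a -> le 0 b -> le 0 c ->
  le (inf a (b + c)) (inf a b + inf a c).
Proof.
move=> a_ge0 b_ge0 c_ge0.
suff h : le (inf a (b + c) - inf a b) (inf a c).
  by have := ble_add (inf a b) h; rewrite subrK [inf a c + _]addrC.
apply: binf_greatest.
  rewrite -subr_bge0 opprB addrA subr_bge0 -[X in ble _ X _]addr0.
  by apply: bleD; [apply: binf_lbl|apply: binf_ge0].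
rewrite /binf opprK addr_bsup; apply: bsup_least.
  apply: (ble_trans (y := 0)) => //.
  by rewrite -(subrr a); apply: ble_add; apply: binf_lbl.
apply: (ble_trans (y := (b + c) - b)); first by apply: ble_add; apply: binf_lbr.
by rewrite addrC addKr.
Qed.

Lemma ble_addr_disjoint {a b c} : le 0 a -> le 0 b -> le 0 c -> inf a c = 0 ->
  le a (b + c) -> le a b.
Proof.
move=> a_ge0 b_ge0 c_ge0 ac0 abc.
have := binfDr_le a_ge0 b_ge0 c_ge0; rewrite binf_l // ac0 addr0 => h.
exact: ble_trans h (binf_lbr _ _).
Qed.

Lemma disjoint_addE x y : inf x y = 0 -> x + y = sup x y.
Proof. by move=> xy0; rewrite -bsupDbinf xy0 addr0. Qed.

Lemma ble_addZinvr {v p g} : le 0 g ->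
  (forall j : nat, le v (p + j.+1%:R^-1 *: g)) -> le v p.
Proof.
move=> g_ge0 vpg; have bpos0 : bpos (v - p) = 0.
  apply: (barchimedean (bpos_ge0 _) (y := g)) => -[|j]; first by rewrite scale0r.
  have j_gt0 : 0 < j.+1%:R^-1 :> R by rewrite invr_gt0.
  rewrite -(bleZ2l j_gt0) scalerA mulVf ?pnatr_eq0 // scale1r.
  apply: bsup_least; last exact: scaler_bge0 (ltW j_gt0) g_ge0.
  by rewrite -subr_bge0 opprB addrA subr_bge0 addrC.
by rewrite -subr_bge0 -bleN2 opprB oppr0 -bpos0; apply: bsup_ubl.
Qed.

Lemma lim_bge0 {f : nat -> E} {z} : f @ \oo --> z -> (forall n, le 0 (f n)) -> le 0 z.
Proof.
move=> fz f_ge0; pose m := bpos (- z).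
have m_le n : `|m| <= `|z - f n|.
  have fn0 : sup (- f n) 0 = 0.
    by apply: bsup_r; rewrite -oppr0 bleN2.
  have := bnorm_mono (babs_bsupB (- z) (- f n) 0).
  by rewrite fn0 subr0 opprK addrC -opprB normrN.
have m0 : m = 0.
  apply/eqP; apply: contraT => m_neq0; have m_gt0 : 0 < `|m| by rewrite normr_gt0.
  have [N _ /(_ N (leqnn N))] := cvgr_dist_lt _ _ fz _ m_gt0.
  by rewrite ltNge m_le.
by rewrite -bleN2 oppr0 -m0; apply: bsup_ubl.
Qed.

Lemma series_bge0 {u : nat -> E} n : (forall k, le 0 (u k)) -> le 0 (series u n).
Proof.
move=> u_ge0; elim: n => [|n IHn]; first by rewrite /series /= big_geq.
by rewrite seriesSr -[X in ble _ X _]addr0; apply: bleD.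
Qed.

Lemma ble_series (u : nat -> E) m n : (forall k, le 0 (u k)) -> (m < n)%N ->
  le (u m) (series u n).
Proof.
move=> u_ge0; elim: n => // n IHn; rewrite ltnS leq_eqVlt seriesSr => /orP[/eqP<-|mn].
  by rewrite -[X in ble _ X _]add0r; apply: ble_add; apply: series_bge0.
by rewrite -[X in ble _ X _]addr0; apply: bleD; [apply: IHn|apply: u_ge0].
Qed.

Lemma geometric_norm_ub {b : nat -> E} : (forall n, le 0 (b n)) ->
  (forall n, `|b n| <= 2^-1 ^+ n) -> exists z, le 0 z /\ forall n, le (b n) z.
Proof.
move=> b_ge0 b_le.
have geo : cvgn (series (geometric 1 (2^-1 : R))).
  by apply: is_cvg_geometric_series; rewrite ger0_norm ?invr_ge0 // invf_lt1 // ltr1n.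
have /cvg_ex[z bz] : cvgn (series b).
  by apply: normed_cvg; apply: (series_le_cvg _ _ _ geo) => n; rewrite /geometric /= ?mul1r //.
exists z; split; first by apply: (lim_bge0 bz) => n; apply: series_bge0.
move=> n; apply/subr_bge0.
apply: (lim_bge0 (f := fun k => series b (k + n.+1) - b n)).
  by apply: cvgB; [rewrite (cvg_shiftn n.+1 (series b))|apply: cvg_cst].
by move=> k; apply/subr_bge0; apply: ble_series; rewrite // ltn_addl.
Qed.

Lemma bleZl_of_le_bposB t u y k : 1 <= k -> le 0 t -> le 0 y -> le t u ->
  le t (bpos (y - k *: u)) -> le (k *: t) y.
Proof.
move=> k_ge1 t_ge0 y_ge0 tu t_le; have k_ge0 : 0 <= k := le_trans ler01 k_ge1.
pose q := bpos (- (y - k *: u)).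
have tq0 : inf t q = 0.
  apply: ble_anti; last exact: binf_ge0 t_ge0 (bpos_ge0 _).
  by rewrite -(binf_bpos_bposN (y - k *: u)); apply: binf_le2.
have ktq0 : inf (k *: t) q = 0.
  apply: ble_anti; last exact: binf_ge0 (scaler_bge0 k_ge0 t_ge0) (bpos_ge0 _).
  rewrite binfC; apply: (ble_trans (y := k *: inf q t)).
    by apply: binfZr_le => //; apply: bpos_ge0.
  by rewrite binfC tq0 scaler0.
apply: (ble_addr_disjoint (scaler_bge0 k_ge0 t_ge0) y_ge0 (bpos_ge0 _) ktq0).
apply: (ble_trans (y := k *: u)); first exact: ble_scale.
by rewrite -[X in ble _ X _](subrKC y) opprB; apply: bleD2l; apply: bsup_ubl.
Qed.

Definition tail_ub (a : nat -> E) (w : E) : Prop :=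
  exists N, forall n, (N <= n)%N -> le (a n) w.

Section TailUpperBounds.
Variables (a : nat -> E) (y : E).
Hypothesis a_le : forall n, le (a n) y.

Definition tail_ubs := {w : E | tail_ub a w}.

Definition tail_ubs_le (w1 w2 : tail_ubs) : Prop := le (sval w2) (sval w1).

Lemma tail_ubs_le_refl w : tail_ubs_le w w. Proof. exact: ble_refl. Qed.

Lemma tail_ubs_le_trans w1 w2 w3 :
  tail_ubs_le w1 w2 -> tail_ubs_le w2 w3 -> tail_ubs_le w1 w3.
Proof. by move=> w12 w23; apply: ble_trans w23 w12. Qed.

Lemma tail_ubs_inhabited : exists w : tail_ubs, True.
Proof. by exists (exist _ y (ex_intro _ 0%N (fun n _ => a_le n))). Qed.

Lemma tail_ubs_directed w1 w2 : exists w3, tail_ubs_le w1 w3 /\ tail_ubs_le w2 w3.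
Proof.
case: w1 w2 => [w1 [N1 a_le1]] [w2 [N2 a_le2]].
have w12 : tail_ub a (inf w1 w2).
  exists (maxn N1 N2) => n; rewrite geq_max => /andP[n1 n2].
  by apply: binf_greatest; [apply: a_le1|apply: a_le2].
by exists (exist _ _ w12); split; [apply: binf_lbl|apply: binf_lbr].
Qed.

Definition tail_ubs_dir : directed_set := DirectedSet tail_ubs_le_refl
  tail_ubs_le_trans tail_ubs_inhabited tail_ubs_directed.

(* The net witnessing order convergence is that of the tail upper bounds of
   [a], directed downwards. *)
Lemma order_conv0_of_tail_ub : (forall n, le 0 (a n)) ->
  (forall v, le 0 v -> (forall w, tail_ub a w -> le v w) -> v = 0) ->
  order_conv B (D := nat_dir) a 0.
Proof.
move=> a_ge0 lb_eq0; exists tail_ubs_dir, sval; split; last first.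
  move=> [w [N a_lew]]; exists N => n /= Nn.
  by rewrite subr0 ger0_babs //; apply: a_lew.
split=> //; split=> [[w [N a_lew]]|v v_lb] /=.
  exact: ble_trans (a_ge0 N) (a_lew N (leqnn N)).
suff <- : bpos v = 0 by apply: bsup_ubl.
apply: lb_eq0 => [|w aw]; first exact: bpos_ge0.
apply: bsup_least; first exact: (v_lb (exist _ w aw)).
by case: aw => N a_lew; apply: ble_trans (a_ge0 N) (a_lew N (leqnn N)).
Qed.

Lemma disjoint_tail_lb_eq0 {v} : le 0 v -> (forall n, inf (a n) v = 0) ->
  (forall w, tail_ub a w -> le v w) -> v = 0.
Proof.
move=> v_ge0 av0 v_lb.
have sub_tail j : (forall n, le (a n) (y - j%:R *: v)) /\ le v (y - j%:R *: v).
  elim: j => [|j [a_lej v_lej]].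
    by rewrite scale0r subr0; split=> //; apply: v_lb; exists 0%N => n _.
  suff a_leSj n : le (a n) (y - j.+1%:R *: v).
    by split=> //; apply: v_lb; exists 0%N => n _.
  have := bsup_least (a_lej n) v_lej; rewrite -disjoint_addE // => h.
  by have := ble_add (- v) h; rewrite addrK -natr1 scalerDl scale1r opprD addrA.
apply: (barchimedean v_ge0 (y := y)) => -[|j].
  by have := (sub_tail 0%N).2; rewrite !scale0r subr0; apply: ble_trans.
have := ble_add (j%:R *: v) (sub_tail j).2; rewrite subrK.
by rewrite -natr1 scalerDl scale1r addrC.
Qed.

End TailUpperBounds.

Section AsymptoticallyDisjoint.
Variables (u : nat -> E) (z : E).
Hypotheses (u_ge0 : forall n, le 0 (u n)) (z_ge0 : le 0 z).
Hypothesis u_inf_le : forall m n, (m < n)%N -> le (inf (u n) (u m)) (n.+1%:R^-1 *: z).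

Lemma tail_lb_le_bposB {y v m k} : 1 <= k ->
  (forall w, tail_ub (fun n => inf (u n) y) w -> le v w) -> le v (bpos (y - k *: u m)).
Proof.
move=> k_ge1 v_lb; have k_ge0 : 0 <= k := le_trans ler01 k_ge1.
apply: (ble_addZinvr (scaler_bge0 k_ge0 z_ge0)) => j; apply: v_lb.
exists (maxn j m.+1) => n; rewrite geq_max => /andP[jn mn].
apply: ble_trans (binf_le_addr_bposB _ _ (k *: u m)) _; rewrite addrC; apply: bleD2l.
apply: ble_trans (binfZr_le _ k_ge1 (u_ge0 n)) _.
apply: (ble_trans (y := k *: (n.+1%:R^-1 *: z))).
  exact: ble_scale k_ge0 (u_inf_le _ _ mn).
rewrite !scalerA mulrC; apply: bleZ2r z_ge0; rewrite ler_wpM2r // lef_pV2 ?posrE //.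
by rewrite ler_nat ltnS.
Qed.

Lemma tail_lb_disjoint {y v} m : le 0 y -> le 0 v ->
  (forall w, tail_ub (fun n => inf (u n) y) w -> le v w) -> inf v (u m) = 0.
Proof.
move=> y_ge0 v_ge0 v_lb; have t_ge0 := binf_ge0 v_ge0 (u_ge0 m).
apply: (barchimedean t_ge0 (y := y)) => -[|k]; first by rewrite scale0r.
apply: (bleZl_of_le_bposB _ (u m)); rewrite ?ler1n //; first exact: binf_lbr.
apply: ble_trans (binf_lbl _ _) (tail_lb_le_bposB _ v_lb).
by rewrite ler1n.
Qed.

Lemma asymp_disjoint_order_conv y : le 0 y ->
  order_conv B (D := nat_dir) (fun n => inf (u n) y) 0.
Proof.
have a_le n : le (inf (u n) y) y by apply: binf_lbr.
move=> y_ge0; apply: (order_conv0_of_tail_ub _ _ a_le) => [n|v v_ge0 v_lb].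
  exact: binf_ge0.
apply: (disjoint_tail_lb_eq0 _ _ a_le v_ge0) => // n.
apply: ble_anti; last exact: binf_ge0 (binf_ge0 _ _) v_ge0.
rewrite -(tail_lb_disjoint n y_ge0 v_ge0 v_lb) binfC.
by apply: binf_le2 => //; apply: binf_lbl.
Qed.

End AsymptoticallyDisjoint.

Lemma un_conv_next {D : directed_set} {x : D -> E} {l} : un_conv B x l ->
  forall e a y, 0 < e -> exists a' : D, dle a a' /\
    (~ has_largest D -> ~ dle a' a) /\ `|inf (abs (x a' - l)) (abs y)| < e.
Proof.
move=> xl e a y e_gt0; have [a0 x_small] := xl y e e_gt0.
have [c [a0c ac]] := ddirected a0 a.
have [D_max|D_nomax] := pselect (has_largest D).
  by exists c; split=> //; split=> //; apply: x_small.
have [g ga] : exists g, ~ dle g a by apply/existsNP => all_le; apply: D_nomax; exists a.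
have [c' [cc' gc']] := ddirected c g.
exists c'; split; first exact: dle_trans ac cc'.
split; first by move=> _ c'a; apply: ga; apply: dle_trans gc' c'a.
by apply: x_small; apply: dle_trans a0c cc'.
Qed.

Lemma un_conv_embedded_series {D : directed_set} {x : D -> E} {l} : un_conv B x l ->
  forall eps : nat -> R, (forall n, 0 < eps n) ->
  exists al : nat -> D, embedded al /\ forall n,
    `|inf (abs (x (al n) - l)) (series (fun m => abs (x (al m) - l)) n)| < eps n.
Proof.
move=> xl eps eps_gt0; pose U a := abs (x a - l).
have next n a y : {a' : D | dle a a' /\ (~ has_largest D -> ~ dle a' a) /\
    `|inf (U a') (abs y)| < eps n}.
  exact/cid/un_conv_next.
have [a0 _] := dinhabited D.
pose fix f n : D * E := if n is n'.+1 then
    let s := (f n').2 + U (f n').1 in (sval (next n (f n').1 s), s)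
  else (sval (next 0%N a0 0), 0).
have fE n : (f n).2 = series (U \o fst \o f) n.
  elim: n => [|n IHn] /=; first by rewrite /series /= big_geq.
  by rewrite seriesSr IHn.
exists (fst \o f); split; first split.
- by move=> n; exact: (svalP (next _ _ _)).1.
- by move=> D_nomax n; exact: (svalP (next _ _ _)).2.1 D_nomax.
move=> n; rewrite -[series _ _]/(series (U \o fst \o f) n) -fE.
have -> : (f n).2 = abs (f n).2.
  by rewrite ger0_babs // fE; apply: series_bge0 => k; apply: babs_ge0.
by case: n => [|n]; exact: (svalP (next _ _ _)).2.2.
Qed.

Lemma un_conv_embedded_uo_conv {D : directed_set} {x : D -> E} {l} : un_conv B x l ->
  exists al : nat -> D, embedded al /\ uo_conv B (D := nat_dir) (fun n => x (al n)) l.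
Proof.
move=> xl; pose eps n : R := 2^-1 ^+ n / n.+1%:R.
have eps_gt0 n : 0 < eps n by rewrite divr_gt0 // exprn_gt0 // invr_gt0.
have [al [al_emb al_small]] := un_conv_embedded_series xl _ eps_gt0.
exists al; split=> // y; pose u n := abs (x (al n) - l).
have u_ge0 n : le 0 (u n) by apply: babs_ge0.
pose b n := n.+1%:R *: inf (u n) (series u n).
have b_ge0 n : le 0 (b n).
  by apply: scaler_bge0 => //; apply: binf_ge0 (u_ge0 n) (series_bge0 n u_ge0).
have b_le n : `|b n| <= 2^-1 ^+ n.
  by rewrite normrZ ger0_norm // mulrC -ler_pdivlMr //; apply: ltW (al_small n).
have [z [z_ge0 bz]] := geometric_norm_ub b_ge0 b_le.
have u_inf_le m n : (m < n)%N -> le (inf (u n) (u m)) (n.+1%:R^-1 *: z).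
  move=> mn; apply: (ble_trans (y := inf (u n) (series u n))).
    by apply: binf_le2 => //; apply: ble_series.
  by rewrite -(bleZ2l (ltr0Sn _ n)) scalerA mulfV // scale1r; apply: bz.
exact: (asymp_disjoint_order_conv _ _ u_ge0 z_ge0 u_inf_le _ (babs_ge0 y)).
Qed.

Lemma uo_conv_un_conv {D : directed_set} {x : D -> E} {l} : order_continuous_norm B ->
  uo_conv B x l -> un_conv B x l.
Proof.
move=> oc xl y e e_gt0; have [D' [w [w_decr x_le]]] := xl y.
have [b0 w_small] := oc D' w w_decr e e_gt0; have [a0 x_le_b0] := x_le b0.
exists a0 => a a0a; apply: le_lt_trans (w_small b0 (dle_refl b0)).
have inf_ge0 : le 0 (inf (abs (x a - l)) (abs y)) by apply: binf_ge0; apply: babs_ge0.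
by have := x_le_b0 a a0a; rewrite subr0 ger0_babs //; apply: bnorm_le.
Qed.

Lemma un_conv_subseq {x : nat -> E} {l phi} : strictly_incr phi ->
  un_conv B (D := nat_dir) x l -> un_conv B (D := nat_dir) (fun n => x (phi n)) l.
Proof.
move=> phi_incr xl y e e_gt0; have [N x_small] := xl y e e_gt0.
by exists N => n Nn; apply: x_small; apply: leq_trans Nn (strictly_incr_geq phi_incr n).
Qed.

Lemma not_un_conv_subseq (x : nat -> E) l : ~ un_conv B (D := nat_dir) x l ->
  exists y e phi, 0 < e /\ strictly_incr phi /\
    forall k, e <= `|inf (abs (x (phi k) - l)) (abs y)|.
Proof.
move=> not_xl.
have [y [e [e_gt0 far]]] : exists y e, 0 < e /\
    forall N, exists n, (N <= n)%N /\ e <= `|inf (abs (x n - l)) (abs y)|.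
  apply: contrapT => not_far; apply: not_xl => y e e_gt0; apply: contrapT => not_ev.
  apply: not_far; exists y, e; split=> // N; apply: contrapT => not_N.
  apply: not_ev; exists N => n /= Nn; rewrite ltNge; apply/negP => e_le.
  by apply: not_N; exists n.
have [g gP] := choice far.
pose phi k := iter k (fun n => g n.+1) (g 0%N).
exists y, e, phi; split=> //; split=> [k|[|k]]; last 2 first.
- exact: (gP 0%N).2.
- exact: (gP _).2.
exact: (gP _).1.
Qed.

Lemma subseq_uo_conv_un_conv (x : nat -> E) l : order_continuous_norm B ->
  (forall phi, strictly_incr phi -> exists psi, strictly_incr psi /\
     uo_conv B (D := nat_dir) (fun n => x (phi (psi n))) l) ->
  un_conv B (D := nat_dir) x l.
Proof.
move=> oc subseq_uo; apply: contrapT.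
move=> /not_un_conv_subseq[y [e [phi [e_gt0 [phi_incr far]]]]].
have [psi [_ /(uo_conv_un_conv oc)/(_ y e e_gt0)[N x_small]]] := subseq_uo phi phi_incr.
by have := x_small N (leqnn N); rewrite ltNge far.
Qed.

End BanachLattice.

Theorem theorem5p2 (R : realType) (E : completeNormedModType R)
  (B : banach_lattice E) :
  (* (1) *)
  (forall (D : directed_set) (x : D -> E) (l : E), un_conv B x l ->
     exists al : nat -> D, embedded al /\
       uo_conv (D := nat_dir) B (fun n => x (al n)) l) /\
  (order_continuous_norm B ->
    (* (2) *)
    (forall (D : directed_set) (x : D -> E) (l : E), un_conv B x l ->
       exists al : nat -> D, embedded al /\
         uo_conv (D := nat_dir) B (fun n => x (al n)) l /\
         un_conv (D := nat_dir) B (fun n => x (al n)) l) /\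
    (* (3) *)
    (forall (x : nat -> E) (l : E),
       un_conv (D := nat_dir) B x l <->
       (forall phi : nat -> nat, strictly_incr phi ->
          exists psi : nat -> nat, strictly_incr psi /\
            uo_conv (D := nat_dir) B (fun n => x (phi (psi n))) l))).
Proof.
split=> [D x l|oc]; first exact: un_conv_embedded_uo_conv.
split=> [D x l xl|x l].
  have [al [al_emb al_uo]] := un_conv_embedded_uo_conv xl.
  by exists al; split=> //; split=> //; apply: uo_conv_un_conv.
split=> [xl phi phi_incr|]; last exact: subseq_uo_conv_un_conv.
have [al [al_emb al_uo]] := un_conv_embedded_uo_conv (un_conv_subseq phi_incr xl).
by exists al; split=> //; apply: embedded_nat_strictly_incr.
Qed.
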